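(* Let $(H,A,C)$ be a Doi-Hopf datum. For $\theta\in V_3$, the formula $h(\theta)_M(c\otimes m)=\sum m_{<0>}\,\theta(c\otimes m_{<-1>})$ ($M\in{}^C\mathcal M(H)_A$, $c\in C$, $m\in M$) defines a natural transformation $h(\theta):GF\to 1$, and $h:V_3\to V$ is $k$-linear and multiplicative: $h(\theta\bullet\theta')=h(\theta)\bullet h(\theta')$, where on $V_3$ the product is $(\theta\bullet\theta')(c\otimes d)=\sum\theta(c_{(3)}\otimes d)\theta'(c_{(1)}\otimes c_{(2)})$ and on $V$ it is $(\nu\bullet\nu')_M=\nu'_M\circ\rho_M\circ\nu_M$. If $H$ is a Hopf algebra, $h$ is bijective, so $V$ and $V_3$ are isomorphic (not necessarily unital) $k$-algebras.
   Context: Sweedler notation $\Delta(c)=\sum c_{(1)}\otimes c_{(2)}$, $\rho(m)=\sum m_{<-1>}\otimes m_{<0>}$. Doi-Hopf datum $(H,A,C)$: $H$ bialgebra over a commutative ring $k$, $A$ left $H$-comodule algebra, $C$ right $H$-module coalgebra, flat over $k$. ${}^C\mathcal M(H)_A$: right $A$-modules with left $C$-coaction satisfying $\rho_M(ma)=\sum m_{<-1>}\cdot a_{<-1>}\otimes m_{<0>}a_{<0>}$; $F$ forgets the coaction, its right adjoint is $G(N)=C\otimes N$ with $(c\otimes n)a=\sum c\cdot a_{<-1>}\otimes na_{<0>}$, $\rho(c\otimes n)=\sum c_{(1)}\otimes c_{(2)}\otimes n$; the unit is $\rho_M$. $V$ is the set of natural transformations $\nu:GF\to 1$ (families of morphisms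 $\nu_M:C\otimes M\to M$ in ${}^C\mathcal M(H)_A$ natural in $M$). $V_3$ is the set of $k$-linear $\theta:C\otimes C\to A$ with $\theta(c\otimes d)a=\sum a_{<0>}\theta(c\cdot a_{<-2>}\otimes d\cdot a_{<-1>})$ and $\sum c_{(1)}\otimes\theta(c_{(2)}\otimes d)=\sum d_{(2)}\cdot\theta(c\otimes d_{(1)})_{<-1>}\otimes\theta(c\otimes d_{(1)})_{<0>}$ for all $a\in A$, $c,d\in C$. *)

(* Tensor products over the commutative ring k are not in the
   library; elements of X (x) Y are represented by finite lists of pairs
   (sum of simple tensors; scalars absorbed in the left factor) and equality
   in X (x) Y (resp. X (x) Y (x) Z) is equality after applying every
   bilinear (resp. trilinear) map into every k-module, which is exactly the
   universal property of the tensor product. *)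
From HB Require Import structures.
From mathcomp Require Import all_boot all_algebra.
Set Implicit Arguments. Unset Strict Implicit. Unset Printing Implicit Defensive.
Import GRing.Theory.
Local Open Scope ring_scope.

Section Tensor.
Variable k : comPzRingType.

Definition lin (X Y : lmodType k) (f : X -> Y) : Prop :=
  forall (a : k) (x y : X), f (a *: x + y) = a *: f x + f y.

Definition bilin (X Y Z : lmodType k) (f : X -> Y -> Z) : Prop :=
  (forall y, lin (fun x => f x y)) /\ (forall x, lin (f x)).

Definition trilin (X Y Z W : lmodType k) (f : X -> Y -> Z -> W) : Prop :=
  [/\ (forall y z, lin (fun x => f x y z)),
      (forall x z, lin (fun y => f x y z)) &
      (forall x y, lin (f x y))].

Definition klin (X : lmodType k) (f : X -> k) : Prop :=
  forall (a : k) (x y : X), f (a *: x + y) = a * f x + f y.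

Definition tsum2 (X Y Z : lmodType k) (f : X -> Y -> Z) (s : seq (X * Y)) : Z :=
  \sum_(p <- s) f p.1 p.2.

Definition tsum3 (X Y Z W : lmodType k) (f : X -> Y -> Z -> W)
  (s : seq (X * Y * Z)) : W :=
  \sum_(p <- s) f p.1.1 p.1.2 p.2.

Definition teq2 (X Y : lmodType k) (s t : seq (X * Y)) : Prop :=
  forall (P : lmodType k) (f : X -> Y -> P), bilin f -> tsum2 f s = tsum2 f t.

Definition teq3 (X Y Z : lmodType k) (s t : seq (X * Y * Z)) : Prop :=
  forall (P : lmodType k) (f : X -> Y -> Z -> P), trilin f -> tsum3 f s = tsum3 f t.

(* a k-linear map Z -> X (x) Y, given through representatives *)
Definition tlin2 (X Y Z : lmodType k) (D : Z -> seq (X * Y)) : Prop :=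
  forall (a : k) (z z' : Z),
    teq2 (D (a *: z + z')) ([seq (a *: p.1, p.2) | p <- D z] ++ D z').

Definition flat (X : lmodType k) : Prop :=
  forall (N' N : lmodType k) (i : N' -> N), lin i -> injective i ->
  forall s : seq (X * N'), teq2 [seq (p.1, i p.2) | p <- s] [::] -> teq2 s [::].

Definition coassoc (X M : lmodType k) (Delta : X -> seq (X * X))
  (rho : M -> seq (X * M)) : Prop :=
  forall m, teq3 [seq (q.1, q.2, p.2) | p <- rho m, q <- Delta p.1]
                 [seq (p.1, q.1, q.2) | p <- rho m, q <- rho p.2].

End Tensor.

Record datum (k : comPzRingType) := Datum {
  dH : algType k;
  dA : algType k;
  dC : lmodType k;
  comH : dH -> seq (dH * dH);
  epsH : dH -> k;
  coA : dA -> seq (dH * dA);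
  actC : dC -> dH -> dC;
  comC : dC -> seq (dC * dC);
  epsC : dC -> k;
  comH_lin : tlin2 comH;
  comH_coassoc : coassoc comH comH;
  epsH_lin : klin epsH;
  comH_counitl : forall h : dH, \sum_(p <- comH h) epsH p.1 *: p.2 = h;
  comH_counitr : forall h : dH, \sum_(p <- comH h) epsH p.2 *: p.1 = h;
  comH1 : teq2 (comH 1) [:: (1, 1)];
  comHM : forall g h : dH,
    teq2 (comH (g * h)) [seq (p.1 * q.1, p.2 * q.2) | p <- comH g, q <- comH h];
  epsH1 : epsH 1 = 1;
  epsHM : forall g h : dH, epsH (g * h) = epsH g * epsH h;
  coA_lin : tlin2 coA;
  coA_coassoc : coassoc comH coA;
  coA_counit : forall a : dA, \sum_(p <- coA a) epsH p.1 *: p.2 = a;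
  coA1 : teq2 (coA 1) [:: (1, 1)];
  coAM : forall a b : dA,
    teq2 (coA (a * b)) [seq (p.1 * q.1, p.2 * q.2) | p <- coA a, q <- coA b];
  actC_bilin : bilin actC;
  actC1 : forall c, actC c 1 = c;
  actCM : forall c g h, actC (actC c g) h = actC c (g * h);
  comC_lin : tlin2 comC;
  comC_coassoc : coassoc comC comC;
  epsC_lin : klin epsC;
  comC_counitl : forall c : dC, \sum_(p <- comC c) epsC p.1 *: p.2 = c;
  comC_counitr : forall c : dC, \sum_(p <- comC c) epsC p.2 *: p.1 = c;
  comC_act : forall c h,
    teq2 (comC (actC c h)) [seq (actC p.1 q.1, actC p.2 q.2) | p <- comC c, q <- comH h];
  epsC_act : forall c h, epsC (actC c h) = epsC c * epsH h;
  C_flat : flat dC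
}.

Arguments comH {k} d _.  Arguments epsH {k} d _.  Arguments coA {k} d _.
Arguments actC {k} d _ _.  Arguments comC {k} d _.  Arguments epsC {k} d _.

Definition is_hopf (k : comPzRingType) (D : datum k) : Prop :=
  exists S : dH D -> dH D, lin S /\
    forall h : dH D,
      \sum_(p <- comH D h) S p.1 * p.2 = epsH D h *: 1 /\
      \sum_(p <- comH D h) p.1 * S p.2 = epsH D h *: 1.

Record dhmod (k : comPzRingType) (D : datum k) := DHMod {
  dM : lmodType k;
  actM : dM -> dA D -> dM;
  coM : dM -> seq (dC D * dM);
  actM_bilin : bilin actM;
  actM1 : forall m, actM m 1 = m;
  actMM : forall m a b, actM (actM m a) b = actM m (a * b);
  coM_lin : tlin2 coM;
  coM_coassoc : coassoc (comC D) coM;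
  coM_counit : forall m, \sum_(p <- coM m) epsC D p.1 *: p.2 = m;
  coM_act : forall m a,
    teq2 (coM (actM m a)) [seq (actC D p.1 q.1, actM p.2 q.2) | p <- coM m, q <- coA D a]
}.

Arguments dM {k D} _.  Arguments actM {k D} _ _ _.  Arguments coM {k D} _ _.

Section Nat.
Variables (k : comPzRingType) (D : datum k).

Definition dhmor (M N : dhmod D) (f : dM M -> dM N) : Prop :=
  [/\ lin f,
      (forall m a, f (actM M m a) = actM N (f m) a) &
      (forall m, teq2 (coM N (f m)) [seq (p.1, f p.2) | p <- coM M m])].

(* a family nu_M : C (x) M -> M, given as bilinear maps C x M -> M *)
Definition nat_family := forall M : dhmod D, dC D -> dM M -> dM M.

(* V : natural transformations GF -> 1.  nu_M is a morphism in ^C M(H)_A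
   from G F M = C (x) M (with (c (x) m) a = sum c.a_{-1} (x) m a_0 and
   rho (c (x) m) = sum c_(1) (x) c_(2) (x) m) to M, natural in M. *)
Definition natV (nu : nat_family) : Prop :=
  [/\ (forall M, bilin (nu M)),
      (forall M c m a,
         \sum_(p <- coA D a) nu M (actC D c p.1) (actM M m p.2) = actM M (nu M c m) a),
      (forall M c m,
         teq2 (coM M (nu M c m)) [seq (p.1, nu M p.2 m) | p <- comC D c]) &
      (forall (M N : dhmod D) (f : dM M -> dM N), dhmor f ->
         forall c m, f (nu M c m) = nu N c (f m))].

Definition V3 (theta : dC D -> dC D -> dA D) : Prop :=
  [/\ bilin theta,
      (forall c d a,
         theta c d * a =
         \sum_(p <- coA D a) \sum_(q <- comH D p.1)
            p.2 * theta (actC D c q.1) (actC D d q.2)) &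
      (forall c d,
         teq2 [seq (p.1, theta p.2 d) | p <- comC D c]
              [seq (actC D q.2 r.1, r.2) | q <- comC D d, r <- coA D (theta c q.1)])].

Definition hmap (theta : dC D -> dC D -> dA D) : nat_family :=
  fun M c m => \sum_(p <- coM M m) actM M p.2 (theta c p.1).

Definition prodV3 (theta theta' : dC D -> dC D -> dA D) : dC D -> dC D -> dA D :=
  fun c d => \sum_(p <- comC D c) \sum_(q <- comC D p.1) theta p.2 d * theta' q.1 q.2.

Definition prodV (nu nu' : nat_family) : nat_family :=
  fun M c m => \sum_(p <- coM M (nu M c m)) nu' M p.1 p.2.

End Nat.

Arguments dhmor {k D M N}.  Arguments nat_family {k} D.  Arguments natV {k D}.
Arguments V3 {k D}.  Arguments hmap {k D}.  Arguments prodV3 {k D}.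
Arguments prodV {k D}.

From HB Require Import structures.
From mathcomp Require Import all_boot all_algebra.
From Stdlib Require Import ClassicalEpsilon FunctionalExtensionality PropExtensionality.
Set Implicit Arguments. Unset Strict Implicit. Unset Printing Implicit Defensive.
Import GRing.Theory.
Local Open Scope ring_scope.

(* The conditions defining V_3 say exactly that h(theta)_M is A-linear and
   C-colinear, while naturality in M is automatic since h(theta)_M only uses the
   coaction and the action of M; multiplicativity is coassociativity of C
   combined with the colinearity of h(theta).  Conversely, a natural nu is
   determined by its component at G(A) = C (x) A: the unit rho_M : M -> C (x) M
   and the maps C (x) A -> C (x) M, c (x) a |-> c (x) m a, are morphisms of
   Doi-Hopf modules, so naturality forces nu = h(theta) for
   theta(c (x) d) = (eps (x) id) nu_{C (x) A}(c (x) d (x) 1), and this formula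
   applied to h(theta) gives back theta. *)

Section LinearMaps.
Variable k : comPzRingType.
Implicit Types X Y Z P : lmodType k.

Lemma lin0 X Y (f : X -> Y) : lin f -> f 0 = 0.
Proof. by move=> fl; have := fl (-1) 0 0; rewrite scaler0 addr0 scaleN1r addNr. Qed.

Lemma linD X Y (f : X -> Y) : lin f -> forall x y, f (x + y) = f x + f y.
Proof. by move=> fl x y; rewrite -[x in LHS]scale1r fl scale1r. Qed.

Lemma linZ X Y (f : X -> Y) : lin f -> forall a x, f (a *: x) = a *: f x.
Proof. by move=> fl a x; rewrite -[a *: x]addr0 fl lin0 // addr0. Qed.

Lemma lin_sum X Y (f : X -> Y) : lin f ->
  forall I (s : seq I) (F : I -> X), f (\sum_(i <- s) F i) = \sum_(i <- s) f (F i).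
Proof.
move=> fl I s F; elim: s => [|i s IH]; first by rewrite !big_nil lin0.
by rewrite !big_cons linD // IH.
Qed.

Lemma lin_comp X Y Z (g : Y -> Z) (f : X -> Y) : lin g -> lin f -> lin (fun x => g (f x)).
Proof. by move=> gl fl a x y; rewrite fl gl. Qed.

Lemma big_scaleD Y I (s : seq I) (F G : I -> Y) a :
  \sum_(i <- s) (a *: F i + G i) = a *: \sum_(i <- s) F i + \sum_(i <- s) G i.
Proof. by rewrite big_split scaler_sumr. Qed.

Lemma lin_sumf X Y I (s : seq I) (F : I -> X -> Y) :
  (forall i, lin (F i)) -> lin (fun x => \sum_(i <- s) F i x).
Proof. by move=> Fl a x y; rewrite -big_scaleD; apply: eq_bigr => i _; rewrite Fl. Qed.

Lemma bilinl X Y Z (f : X -> Y -> Z) : bilin f -> forall y, lin (fun x => f x y).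
Proof. by case. Qed.

Lemma bilinr X Y Z (f : X -> Y -> Z) : bilin f -> forall x, lin (f x).
Proof. by case. Qed.

Lemma lin_id X : lin (fun x : X => x).
Proof. by []. Qed.

Lemma bilin_comp X Y Z X' Y' (f : X -> Y -> Z) (g : X' -> X) (h : Y' -> Y) :
  bilin f -> lin g -> lin h -> bilin (fun x y => f (g x) (h y)).
Proof. by move=> fb gl hl; split=> [y|x] a u v; rewrite ?gl ?hl ?(bilinl fb) ?(bilinr fb). Qed.

Lemma bilin_sum X Y Z I (s : seq I) (F : I -> X -> Y -> Z) :
  (forall i, bilin (F i)) -> bilin (fun x y => \sum_(i <- s) F i x y).
Proof.
move=> Fb; split=> [y|x]; apply: lin_sumf => i.
  exact: bilinl (Fb i) y.
exact: bilinr (Fb i) x.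
Qed.

Lemma bilin_flip X Y Z (f : X -> Y -> Z) : bilin f -> bilin (fun y x => f x y).
Proof. by case. Qed.

Lemma mul_bilin (B : algType k) : bilin (fun x y : B => x * y).
Proof.
split=> [y a x x'|x a y y'] /=; first by rewrite mulrDl scalerAl.
by rewrite mulrDr scalerAr.
Qed.

Lemma lin_tsum2 X Y Z P (D : Z -> seq (X * Y)) (g : X -> Y -> P) :
  tlin2 D -> bilin g -> lin (fun z => tsum2 g (D z)).
Proof.
move=> Dl gb a z z'; rewrite (Dl a z z' _ _ gb) /tsum2 big_cat big_map scaler_sumr.
by congr (_ + _); apply: eq_bigr => p _; rewrite (linZ (bilinl gb p.2)).
Qed.

Lemma tsum2_cat X Y P (f : X -> Y -> P) s t : tsum2 f (s ++ t) = tsum2 f s + tsum2 f t.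
Proof. by rewrite /tsum2 big_cat. Qed.

Lemma tsum2_scale X Y P (f : X -> Y -> P) a s : bilin f ->
  tsum2 f [seq (a *: p.1, p.2) | p <- s] = a *: tsum2 f s.
Proof.
move=> fb; rewrite /tsum2 big_map scaler_sumr.
by apply: eq_bigr => p _; rewrite (linZ (bilinl fb p.2)).
Qed.

Lemma teq2_sym X Y (s t : seq (X * Y)) : teq2 s t -> teq2 t s.
Proof. by move=> st P f fb; rewrite st. Qed.

Lemma teq2_trans X Y (s t u : seq (X * Y)) : teq2 s t -> teq2 t u -> teq2 s u.
Proof. by move=> st tu P f fb; rewrite st // tu. Qed.

End LinearMaps.

(* X (x) Y is the quotient of formal sums (lists of pairs) by [teq2]; a class is
   stored as the representative picked by [epsilon], so that equal tensors are
   Leibniz-equal. *)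
Section TensorProduct.
Variables (k : comPzRingType) (X Y : lmodType k).
Implicit Types (s t : seq (X * Y)) (P : lmodType k).

Definition trep s : seq (X * Y) := epsilon (inhabits [::]) (teq2 s).

Lemma trepP s : teq2 s (trep s).
Proof. by apply: (epsilon_spec (inhabits [::]) (teq2 s)); exists s. Qed.

Lemma trep_eq s t : teq2 s t -> trep s = trep t.
Proof.
move=> st; rewrite /trep; congr epsilon.
apply: functional_extensionality => u; apply: propositional_extensionality.
by split; [apply: teq2_trans (teq2_sym st) | apply: teq2_trans st].
Qed.

Lemma trep_idem s : trep (trep s) = trep s.
Proof. exact/trep_eq/teq2_sym/trepP. Qed.

Record tens := Tens { tens_rep : seq (X * Y); _ : trep tens_rep == tens_rep }.
HB.instance Definition _ := [isSub for tens_rep].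
HB.instance Definition _ := [Choice of tens by <:].

Definition tens_of s : tens := @Tens (trep s) (introT eqP (trep_idem s)).

Lemma tens_of_eq s t : teq2 s t -> tens_of s = tens_of t.
Proof. by move=> st; apply: val_inj; apply: trep_eq. Qed.

Lemma tens_ofK x : tens_of (tens_rep x) = x.
Proof. by apply: val_inj => /=; apply/eqP; case: x. Qed.

Lemma tsum2_rep P (f : X -> Y -> P) s : bilin f -> tsum2 f (tens_rep (tens_of s)) = tsum2 f s.
Proof. by move=> fb; apply: (teq2_sym (trepP s)). Qed.

Definition tadd (x y : tens) := tens_of (tens_rep x ++ tens_rep y).
Definition tscale (a : k) (x : tens) := tens_of [seq (a *: p.1, p.2) | p <- tens_rep x].

Ltac tens_eq := apply: tens_of_eq => P f fb;
  rewrite ?(tsum2_cat, tsum2_scale, tsum2_rep) // /tsum2 ?big_nil.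

Lemma taddA : associative tadd.
Proof. by move=> x y z; tens_eq; rewrite addrA. Qed.

Lemma taddC : commutative tadd.
Proof. by move=> x y; tens_eq; rewrite addrC. Qed.

Lemma tadd0 : left_id (tens_of [::]) tadd.
Proof. by move=> x; rewrite -[RHS]tens_ofK; tens_eq; rewrite add0r. Qed.

Lemma taddN : left_inverse (tens_of [::]) (tscale (-1)) tadd.
Proof. by move=> x; tens_eq; rewrite scaleN1r addNr. Qed.

HB.instance Definition _ := GRing.isZmodule.Build tens taddA taddC tadd0 taddN.

Lemma tscaleA a b x : tscale a (tscale b x) = tscale (a * b) x.
Proof. by tens_eq; rewrite scalerA. Qed.

Lemma tscale1 : left_id 1 tscale.
Proof. by move=> x; rewrite -[RHS]tens_ofK; tens_eq; rewrite scale1r. Qed.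

Lemma tscaleDr : right_distributive tscale tadd.
Proof. by move=> a x y; tens_eq; rewrite scalerDr. Qed.

Lemma tscaleDl x : {morph tscale^~ x : a b / a + b >-> tadd a b}.
Proof. by move=> a b; tens_eq; rewrite scalerDl. Qed.

HB.instance Definition _ :=
  GRing.Zmodule_isLmodule.Build k tens tscaleA tscale1 tscaleDr tscaleDl.

Definition tmul (x : X) (y : Y) : tens := tens_of [:: (x, y)].

Definition tlift P (f : X -> Y -> P) (z : tens) : P := tsum2 f (tens_rep z).

Lemma tlift_tens_of P (f : X -> Y -> P) s : bilin f -> tlift f (tens_of s) = tsum2 f s.
Proof. exact: tsum2_rep. Qed.

Lemma tlift_tmul P (f : X -> Y -> P) x y : bilin f -> tlift f (tmul x y) = f x y.
Proof. by move=> fb; rewrite tlift_tens_of // /tsum2 big_seq1. Qed.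

Lemma tlift_lin P (f : X -> Y -> P) : bilin f -> lin (tlift f).
Proof. by move=> fb a x y; rewrite /tlift tsum2_rep // tsum2_cat tsum2_rep // tsum2_scale. Qed.

Lemma tens_of_cat s t : tens_of (s ++ t) = tens_of s + tens_of t.
Proof. by tens_eq. Qed.

Lemma tens_of_scale a s : tens_of [seq (a *: p.1, p.2) | p <- s] = a *: tens_of s.
Proof. by tens_eq. Qed.

Lemma tens_of_sum s : tens_of s = \sum_(p <- s) tmul p.1 p.2.
Proof.
elim: s => [|[x y] s IH]; first by rewrite big_nil.
by rewrite big_cons -IH -tens_of_cat.
Qed.

Lemma tmul_bilin : bilin tmul.
Proof.
by split=> [y|x] a u v; rewrite -tens_of_scale -tens_of_cat; tens_eq;
  rewrite !big_seq1 /= ?(bilinl fb) ?(bilinr fb).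
Qed.

Lemma tens_lin_ext P (g1 g2 : tens -> P) : lin g1 -> lin g2 ->
  (forall x y, g1 (tmul x y) = g2 (tmul x y)) -> forall z, g1 z = g2 z.
Proof.
move=> l1 l2 e z; rewrite -(tens_ofK z) tens_of_sum (lin_sum l1) (lin_sum l2).
by apply: eq_bigr => p _; apply: e.
Qed.

End TensorProduct.

Section InducedModule.
Variables (k : comPzRingType) (D : datum k).
Local Notation C := (dC D).
Local Notation A := (dA D).
Variables (N : lmodType k) (actN : N -> A -> N).
Hypotheses (actN_bilin : bilin actN) (actN1 : forall n, actN n 1 = n)
  (actNM : forall n a b, actN (actN n a) b = actN n (a * b)).
Local Notation T := (tens C N).

Lemma tmul_actC_bilin c n :
  bilin (fun h b => tmul (actC D c h) (actN n b) : T).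
Proof. exact: bilin_comp (tmul_bilin C N) (bilinr (actC_bilin D) c) (bilinr actN_bilin n). Qed.

Definition tmul_act (a : A) (c : C) (n : N) : T :=
  \sum_(q <- coA D a) tmul (actC D c q.1) (actN n q.2).

Lemma tmul_act_bilin a : bilin (tmul_act a).
Proof.
apply: bilin_sum => q.
exact: bilin_comp (tmul_bilin C N) (bilinl (actC_bilin D) q.1) (bilinl actN_bilin q.2).
Qed.

Definition actG (x : T) (a : A) : T := tlift (tmul_act a) x.

Lemma actG_tmul c n a : actG (tmul c n) a = tmul_act a c n.
Proof. exact: tlift_tmul (tmul_act_bilin a). Qed.

Lemma actG_bilin : bilin actG.
Proof.
split=> [a|x]; first exact: tlift_lin (tmul_act_bilin a).
apply: lin_sumf => p; exact: lin_tsum2 (@coA_lin _ D) (tmul_actC_bilin p.1 p.2).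
Qed.

Lemma actG1 x : actG x 1 = x.
Proof.
apply: (tens_lin_ext (bilinl actG_bilin 1) (@lin_id _ _)) => c n.
have := coA1 (tmul_actC_bilin c n).
by rewrite actG_tmul /tsum2 big_seq1 /= actC1 actN1.
Qed.

Lemma actGM x a b : actG (actG x a) b = actG x (a * b).
Proof.
have actGa_b := lin_comp (bilinl actG_bilin b) (bilinl actG_bilin a).
apply: (tens_lin_ext actGa_b (bilinl actG_bilin (a * b))) => c n /=.
rewrite !actG_tmul /tmul_act (lin_sum (bilinl actG_bilin b)).
have := coAM a b (tmul_actC_bilin c n); rewrite /tsum2 big_allpairs_dep /= => ->.
apply: eq_bigr => q _; rewrite actG_tmul /tmul_act; apply: eq_bigr => r _.
by rewrite actCM actNM.
Qed.

Definition coG (x : T) : seq (C * T) :=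
  [seq (q.1, tmul q.2 p.2) | p <- tens_rep x, q <- comC D p.1].

Definition precomul (P : lmodType k) (f : C -> T -> P) (c : C) (n : N) : P :=
  \sum_(q <- comC D c) f q.1 (tmul q.2 n).

Lemma precomul_bilin (P : lmodType k) (f : C -> T -> P) : bilin f -> bilin (precomul f).
Proof.
move=> fb; split=> [n|c].
  exact: lin_tsum2 (@comC_lin _ D) (bilin_comp fb (@lin_id _ _) (bilinl (tmul_bilin C N) n)).
apply: lin_sumf => q; exact: lin_comp (bilinr fb q.1) (bilinr (tmul_bilin C N) q.2).
Qed.

Lemma coG_tsum2 (P : lmodType k) (f : C -> T -> P) x : tsum2 f (coG x) = tlift (precomul f) x.
Proof. by rewrite /tsum2 /coG big_allpairs_dep. Qed.

Lemma coG_tmul (P : lmodType k) (f : C -> T -> P) c n :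
  bilin f -> tsum2 f (coG (tmul c n)) = precomul f c n.
Proof. by move=> fb; rewrite coG_tsum2 tlift_tmul //; apply: precomul_bilin. Qed.

Lemma coG_lin : tlin2 coG.
Proof.
move=> a x y P f fb; rewrite coG_tsum2 tsum2_cat tsum2_scale // !coG_tsum2.
exact: (tlift_lin (precomul_bilin fb)).
Qed.

Lemma coG_coassoc : coassoc (comC D) coG.
Proof.
move=> x P f [f1 f2 f3]; rewrite /tsum3 !big_allpairs_dep /=.
apply: eq_bigr => p _.
have coG_f (q : C * C) : \sum_(r <- coG (tmul q.2 p.2)) f q.1 r.1 r.2 = precomul (f q.1) q.2 p.2.
  exact: coG_tmul (conj (f2 q.1) (f3 q.1)).
under [RHS]eq_bigr => q _ do rewrite coG_f.
have tb : trilin (fun y1 y2 y3 => f y1 y2 (tmul y3 p.2)).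
  split=> [y z|y z|y z]; [exact: f1 | exact: f2 |].
  exact: lin_comp (f3 y z) (bilinl (tmul_bilin C N) p.2).
by have := comC_coassoc p.1 tb; rewrite /tsum3 !big_allpairs_dep.
Qed.

Lemma epsC_scale_bilin (Z : lmodType k) : bilin (fun (c : C) (z : Z) => epsC D c *: z).
Proof.
split=> [z|c] b u v /=; first by rewrite (@epsC_lin _ D) scalerDl scalerA.
by rewrite scalerDr scalerA mulrC -scalerA.
Qed.

Lemma coG_counit x : \sum_(p <- coG x) epsC D p.1 *: p.2 = x.
Proof.
rewrite -[LHS]/(tsum2 (fun c (t : T) => epsC D c *: t) (coG x)) coG_tsum2.
have eps_lin := tlift_lin (precomul_bilin (epsC_scale_bilin T)).
apply: (tens_lin_ext eps_lin (@lin_id _ _)) => c n.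
rewrite tlift_tmul /precomul; last exact: precomul_bilin (epsC_scale_bilin T).
under eq_bigr => q _ do rewrite -(linZ (bilinl (tmul_bilin C N) n)).
by rewrite -(lin_sum (bilinl (tmul_bilin C N) n)) comC_counitl.
Qed.

Section ActionCoaction.
Variables (P : lmodType k) (f : C -> T -> P) (a : A).
Hypothesis fb : bilin f.

Definition act_form (c : C) (t : T) : P := \sum_(q <- coA D a) f (actC D c q.1) (actG t q.2).

Lemma act_form_bilin : bilin act_form.
Proof.
apply: bilin_sum => q.
exact: bilin_comp fb (bilinl (actC_bilin D) q.1) (bilinl actG_bilin q.2).
Qed.

Lemma precomul_tmul_act c n :
  tlift (precomul f) (tmul_act a c n) = precomul act_form c n.
Proof.
rewrite /tmul_act (lin_sum (tlift_lin (precomul_bilin fb))).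
under eq_bigr => q _ do rewrite (tlift_tmul _ _ (precomul_bilin fb)) /precomul.
transitivity (\sum_(q <- coA D a) \sum_(s <- comC D c) \sum_(t <- comH D q.1)
   f (actC D s.1 t.1) (tmul (actC D s.2 t.2) (actN n q.2))).
  apply: eq_bigr => q _.
  have fq := bilin_comp fb (@lin_id _ _) (bilinl (tmul_bilin C N) (actN n q.2)).
  by have := comC_act c q.1 fq; rewrite /tsum2 big_allpairs_dep /= => ->.
rewrite exchange_big /precomul; apply: eq_bigr => s _.
under [RHS]eq_bigr => q _ do rewrite actG_tmul /tmul_act (lin_sum (bilinr fb _)).
have tb : trilin (fun h1 h2 b => f (actC D s.1 h1) (tmul (actC D s.2 h2) (actN n b))).
  split=> [h2 b|h1 b|h1 h2] e u v.
  - by rewrite (bilinr (actC_bilin D)) (bilinl fb).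
  - by rewrite (bilinr (actC_bilin D)) (bilinl (tmul_bilin C N)) (bilinr fb).
  - by rewrite (bilinr actN_bilin) (bilinr (tmul_bilin C N)) (bilinr fb).
by have := coA_coassoc a tb; rewrite /tsum3 !big_allpairs_dep.
Qed.

End ActionCoaction.

Lemma coG_act x a :
  teq2 (coG (actG x a)) [seq (actC D p.1 q.1, actG p.2 q.2) | p <- coG x, q <- coA D a].
Proof.
move=> P f fb; have ab := act_form_bilin a fb.
rewrite coG_tsum2 /tsum2 big_allpairs_dep.
rewrite -[RHS]/(tsum2 (act_form f a) (coG x)) coG_tsum2.
have lhs_lin := lin_comp (tlift_lin (precomul_bilin fb)) (bilinl actG_bilin a).
apply: (tens_lin_ext lhs_lin (tlift_lin (precomul_bilin ab))) => c n /=.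
by rewrite actG_tmul precomul_tmul_act // tlift_tmul //; apply: precomul_bilin.
Qed.

Definition Gmod : dhmod D :=
  DHMod actG_bilin actG1 actGM coG_lin coG_coassoc coG_counit coG_act.

End InducedModule.

Section Functoriality.
Variables (k : comPzRingType) (D : datum k).
Local Notation C := (dC D).
Local Notation A := (dA D).

Definition epsG (N : lmodType k) (y : tens C N) : N := tlift (fun c n => epsC D c *: n) y.

Lemma epsG_tmul (N : lmodType k) c (n : N) : epsG (tmul c n) = epsC D c *: n.
Proof. exact: tlift_tmul (epsC_scale_bilin D N). Qed.

Lemma epsG_lin (N : lmodType k) : lin (@epsG N).
Proof. exact: tlift_lin (epsC_scale_bilin D N). Qed.

Lemma coG_counitr (N : lmodType k) (y : tens C N) :
  \sum_(r <- coG y) tmul r.1 (epsG r.2) = y.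
Proof.
have hb := bilin_comp (tmul_bilin C N) (@lin_id _ _) (@epsG_lin N).
rewrite -[LHS]/(tsum2 (fun c (t : tens C N) => tmul c (epsG t)) (coG y)) coG_tsum2.
apply: (tens_lin_ext (tlift_lin (precomul_bilin hb)) (@lin_id _ _)) => c n /=.
rewrite tlift_tmul /precomul; last exact: precomul_bilin hb.
under eq_bigr => q _ do rewrite epsG_tmul (linZ (bilinr (tmul_bilin C N) q.1))
  -(linZ (bilinl (tmul_bilin C N) n)).
by rewrite -(lin_sum (bilinl (tmul_bilin C N) n)) comC_counitr.
Qed.

Lemma epsG_act (N : lmodType k) (actN : N -> A -> N) (actN_bilin : bilin actN) y a :
  epsG (actG actN y a) = actN (epsG y) a.
Proof.
have l1 := lin_comp (@epsG_lin N) (bilinl (actG_bilin actN_bilin) a).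
have l2 := lin_comp (bilinl actN_bilin a) (@epsG_lin N).
apply: (tens_lin_ext l1 l2) => c n /=.
rewrite (actG_tmul actN_bilin) /tmul_act (lin_sum (@epsG_lin N)) epsG_tmul.
rewrite (linZ (bilinl actN_bilin a)) -{2}(coA_counit a) (lin_sum (bilinr actN_bilin n)).
rewrite scaler_sumr; apply: eq_bigr => q _.
by rewrite epsG_tmul epsC_act (linZ (bilinr actN_bilin n)) scalerA.
Qed.

Definition Gmap (N N' : lmodType k) (f : N -> N') (y : tens C N) : tens C N' :=
  tlift (fun c n => tmul c (f n)) y.

Section Gmap.
Variables (N N' : lmodType k) (f : N -> N').
Hypothesis f_lin : lin f.

Let tmul_f_bilin : bilin (fun (c : C) n => tmul c (f n)).
Proof. exact: bilin_comp (tmul_bilin C N') (@lin_id _ _) f_lin. Qed.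

Lemma Gmap_tmul c n : Gmap f (tmul c n) = tmul c (f n).
Proof. exact: tlift_tmul tmul_f_bilin. Qed.

Lemma Gmap_lin : lin (Gmap f).
Proof. exact: tlift_lin tmul_f_bilin. Qed.

Lemma epsG_Gmap y : epsG (Gmap f y) = f (epsG y).
Proof.
have l1 := lin_comp (@epsG_lin N') Gmap_lin.
apply: (tens_lin_ext l1 (lin_comp f_lin (@epsG_lin N))) => c n /=.
by rewrite Gmap_tmul !epsG_tmul (linZ f_lin).
Qed.

End Gmap.
End Functoriality.

Section GmapMorphism.
Variables (k : comPzRingType) (D : datum k).
Local Notation C := (dC D).
Local Notation A := (dA D).
Variables (N N' : lmodType k) (actN : N -> A -> N) (actN' : N' -> A -> N').
Hypotheses (actN_bilin : bilin actN) (actN1 : forall n, actN n 1 = n)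
  (actNM : forall n a b, actN (actN n a) b = actN n (a * b)).
Hypotheses (actN'_bilin : bilin actN') (actN'1 : forall n, actN' n 1 = n)
  (actN'M : forall n a b, actN' (actN' n a) b = actN' n (a * b)).
Variable f : N -> N'.
Hypotheses (f_lin : lin f) (f_act : forall n a, f (actN n a) = actN' (f n) a).

Lemma Gmap_act y a : Gmap f (actG actN y a) = actG actN' (Gmap f y) a.
Proof.
have l1 := lin_comp (Gmap_lin f_lin) (bilinl (actG_bilin actN_bilin) a).
have l2 := lin_comp (bilinl (actG_bilin actN'_bilin) a) (Gmap_lin f_lin).
apply: (tens_lin_ext l1 l2) => c n /=.
rewrite (actG_tmul actN_bilin) Gmap_tmul // (actG_tmul actN'_bilin) /tmul_act.
by rewrite (lin_sum (Gmap_lin f_lin)); apply: eq_bigr => q _; rewrite Gmap_tmul // f_act.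
Qed.

Lemma coG_Gmap (y : tens C N) : teq2 (coG (Gmap f y)) [seq (p.1, Gmap f p.2) | p <- coG y].
Proof.
move=> P g gb; have gfb := bilin_comp gb (@lin_id _ _) (Gmap_lin f_lin).
rewrite coG_tsum2 /tsum2 big_map -[RHS]/(tsum2 (fun c t => g c (Gmap f t)) (coG y)).
rewrite coG_tsum2.
have lhs_lin := lin_comp (tlift_lin (precomul_bilin gb)) (Gmap_lin f_lin).
apply: (tens_lin_ext lhs_lin (tlift_lin (precomul_bilin gfb))) => c n /=.
rewrite Gmap_tmul // !tlift_tmul; try exact: precomul_bilin.
by apply: eq_bigr => q _; rewrite Gmap_tmul.
Qed.

Lemma Gmap_dhmor :
  @dhmor k D (Gmod actN_bilin actN1 actNM) (Gmod actN'_bilin actN'1 actN'M) (Gmap f).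
Proof. by split; [exact: Gmap_lin | exact: Gmap_act | exact: coG_Gmap]. Qed.

End GmapMorphism.

Section AdjunctionUnit.
Variables (k : comPzRingType) (D : datum k).
Local Notation C := (dC D).
Local Notation A := (dA D).

Definition GA : dhmod D := Gmod (mul_bilin A) (@mulr1 A) (fun x a b => esym (mulrA x a b)).

Definition GF (M : dhmod D) : dhmod D := Gmod (actM_bilin M) (@actM1 _ _ M) (@actMM _ _ M).

Definition rho (M : dhmod D) (m : dM M) : tens C (dM M) := tens_of (coM M m).

Lemma rho_dhmor (M : dhmod D) : @dhmor k D M (GF M) (@rho M).
Proof.
split=> /=.
- by move=> a m m'; rewrite /rho (tens_of_eq (coM_lin a m m')) tens_of_cat tens_of_scale.
- move=> m a; rewrite /rho (tens_of_eq (coM_act m a)) /actG tlift_tens_of; last first.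
    exact: tmul_act_bilin (actM_bilin M) a.
  by rewrite tens_of_sum /tsum2 big_allpairs_dep.
- move=> m P f fb; rewrite coG_tsum2 /rho tlift_tens_of; last exact: precomul_bilin.
  rewrite /tsum2 big_map /=.
  under [RHS]eq_bigr => p _ do rewrite tens_of_sum (lin_sum (bilinr fb _)).
  have tb : trilin (fun x y z => f x (tmul y z)).
    split=> [y z|x z|x y]; first exact: bilinl fb _.
      exact: lin_comp (bilinr fb x) (bilinl (tmul_bilin C (dM M)) z).
    exact: lin_comp (bilinr fb x) (bilinr (tmul_bilin C (dM M)) y).
  by have := coM_coassoc m tb; rewrite /tsum3 !big_allpairs_dep.
Qed.

Lemma epsG_rho (M : dhmod D) (m : dM M) : epsG (rho m) = m.
Proof. by rewrite /epsG /rho tlift_tens_of; [exact: coM_counit | exact: epsC_scale_bilin]. Qed.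

End AdjunctionUnit.

Arguments GA {k D}.

Section HmapNatural.
Variables (k : comPzRingType) (D : datum k).
Local Notation C := (dC D).
Local Notation A := (dA D).

Definition V3_act (theta : C -> C -> A) := forall c d a,
  theta c d * a =
  \sum_(p <- coA D a) \sum_(q <- comH D p.1) p.2 * theta (actC D c q.1) (actC D d q.2).

Definition V3_coact (theta : C -> C -> A) := forall c d,
  teq2 [seq (p.1, theta p.2 d) | p <- comC D c]
       [seq (actC D q.2 r.1, r.2) | q <- comC D d, r <- coA D (theta c q.1)].

Variable theta : C -> C -> A.
Hypothesis theta_bilin : bilin theta.

Lemma actM_theta_bilin (M : dhmod D) c : bilin (fun x m => actM M m (theta c x)).
Proof. exact: bilin_comp (bilin_flip (actM_bilin M)) (bilinr theta_bilin c) (@lin_id _ _). Qed.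

Lemma hmap_bilin M : bilin (hmap theta M).
Proof.
split=> [m|c]; last exact: lin_tsum2 (@coM_lin _ _ M) (actM_theta_bilin M c).
apply: lin_sumf => p; exact: lin_comp (bilinr (actM_bilin M) p.2) (bilinl theta_bilin p.1).
Qed.

Lemma hmap_dhmor (M N : dhmod D) (f : dM M -> dM N) :
  dhmor f -> forall c m, f (hmap theta M c m) = hmap theta N c (f m).
Proof.
case=> f_lin f_act f_co c m; rewrite /hmap (lin_sum f_lin).
have := f_co m _ _ (actM_theta_bilin N c); rewrite /tsum2 big_map /= => ->.
by apply: eq_bigr => r _; rewrite f_act.
Qed.

Hypothesis theta_act : V3_act theta.

Lemma hmap_act M c m a :
  \sum_(p <- coA D a) hmap theta M (actC D c p.1) (actM M m p.2) = actM M (hmap theta M c m) a.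
Proof.
rewrite /hmap.
transitivity (\sum_(p <- coA D a) \sum_(r <- coM M m) \sum_(s <- coA D p.2)
   actM M (actM M r.2 s.2) (theta (actC D c p.1) (actC D r.1 s.1))).
  apply: eq_bigr => p _.
  by have := coM_act m p.2 (actM_theta_bilin M (actC D c p.1)); rewrite /tsum2 big_allpairs_dep.
rewrite exchange_big /= (lin_sum (bilinl (actM_bilin M) a)); apply: eq_bigr => r _.
have actM_sum := lin_sum (bilinr (actM_bilin M) r.2).
rewrite actMM theta_act actM_sum.
under [RHS]eq_bigr => p _ do rewrite actM_sum.
under [LHS]eq_bigr => p _ do under eq_bigr => s _ do rewrite actMM.
have tb : trilin (fun h1 h2 b => actM M r.2 (b * theta (actC D c h1) (actC D r.1 h2))).
  by split=> [h2 b|h1 b|h1 h2] e u v /=; rewrite ?(bilinr (actC_bilin D)) ?(bilinl theta_bilin)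
    ?(bilinr theta_bilin) ?(bilinl (mul_bilin A)) ?(bilinr (mul_bilin A)) (bilinr (actM_bilin M)).
by have := coA_coassoc a tb; rewrite /tsum3 !big_allpairs_dep.
Qed.

Hypothesis theta_coact : V3_coact theta.

Lemma hmap_coact M c m :
  teq2 (coM M (hmap theta M c m)) [seq (p.1, hmap theta M p.2 m) | p <- comC D c].
Proof.
move=> P f fb.
transitivity (\sum_(r <- coM M m) \sum_(s <- coM M r.2) \sum_(t <- coA D (theta c r.1))
   f (actC D s.1 t.1) (actM M s.2 t.2)).
  rewrite /hmap (lin_sum (lin_tsum2 (@coM_lin _ _ M) fb)); apply: eq_bigr => r _.
  by have := coM_act r.2 (theta c r.1) fb; rewrite /tsum2 big_allpairs_dep.
have tb : trilin (fun x y z => \sum_(t <- coA D (theta c x)) f (actC D y t.1) (actM M z t.2)).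
  split=> [y z|x z|x y].
  - have fyz := bilin_comp fb (bilinr (actC_bilin D) y) (bilinr (actM_bilin M) z).
    exact: lin_comp (lin_tsum2 (@coA_lin _ D) fyz) (bilinr theta_bilin c).
  - apply: lin_sumf => t; exact: lin_comp (bilinl fb _) (bilinl (actC_bilin D) t.1).
  - apply: lin_sumf => t; exact: lin_comp (bilinr fb _) (bilinl (actM_bilin M) t.2).
have := coM_coassoc m tb; rewrite /tsum3 !big_allpairs_dep /= => <-.
transitivity (\sum_(p <- coM M m) \sum_(u <- comC D c) f u.1 (actM M p.2 (theta u.2 p.1))).
  apply: eq_bigr => p _.
  have fp := bilin_comp fb (@lin_id _ _) (bilinr (actM_bilin M) p.2).
  by have := theta_coact c p.1 fp; rewrite /tsum2 big_map big_allpairs_dep /= => ->.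
rewrite exchange_big /tsum2 big_map; apply: eq_bigr => u _.
by rewrite /hmap (lin_sum (bilinr fb u.1)).
Qed.

Lemma natV_hmap : natV (hmap theta).
Proof.
split; [exact: hmap_bilin | exact: hmap_act | exact: hmap_coact |].
by move=> M N f; apply: hmap_dhmor.
Qed.

End HmapNatural.

Lemma hmap_linear k (D : datum k) (a : k) (theta theta' : dC D -> dC D -> dA D) M c m :
  hmap (fun x y => a *: theta x y + theta' x y) M c m
  = a *: hmap theta M c m + hmap theta' M c m.
Proof. by rewrite /hmap -big_scaleD; apply: eq_bigr => r _; rewrite (bilinr (actM_bilin M)). Qed.

Section HmapMultiplicative.
Variables (k : comPzRingType) (D : datum k).
Local Notation C := (dC D).
Local Notation A := (dA D).
Variables (theta theta' : C -> C -> A) (M : dhmod D) (c : C) (m : dM M).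
Hypotheses (theta_bilin : bilin theta) (theta'_bilin : bilin theta').
Hypothesis theta_coact : V3_coact theta.

Let triple_sum := \sum_(u <- comC D c) \sum_(w <- comC D u.2) \sum_(r <- coM M m)
  actM M r.2 (theta w.2 r.1 * theta' u.1 w.1).

Lemma prodV_hmap_expand : prodV (hmap theta) (hmap theta') M c m = triple_sum.
Proof.
have := hmap_coact theta_bilin theta_coact c m (hmap_bilin theta'_bilin M).
rewrite /prodV /tsum2 big_map /= => ->; apply: eq_bigr => u _.
have := hmap_coact theta_bilin theta_coact u.2 m (actM_theta_bilin theta'_bilin M u.1).
rewrite /hmap /tsum2 big_map /= => ->; apply: eq_bigr => w _.
by rewrite (lin_sum (bilinl (actM_bilin M) _)); apply: eq_bigr => r _; rewrite actMM.
Qed.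

Lemma hmap_prodV3_expand : hmap (prodV3 theta theta') M c m = triple_sum.
Proof.
rewrite /hmap /prodV3.
under eq_bigr => r _ do rewrite (lin_sum (bilinr (actM_bilin M) _)).
rewrite exchange_big /=.
under eq_bigr => p _ do under eq_bigr => r _ do rewrite (lin_sum (bilinr (actM_bilin M) _)).
under eq_bigr => p _ do rewrite exchange_big /=.
have tb : trilin (fun x y z => \sum_(r <- coM M m) actM M r.2 (theta z r.1 * theta' x y)).
  split=> [y z|x z|x y]; apply: lin_sumf => r; apply: lin_comp (bilinr (actM_bilin M) _) _.
  - exact: lin_comp (bilinr (mul_bilin A) _) (bilinl theta'_bilin y).
  - exact: lin_comp (bilinr (mul_bilin A) _) (bilinr theta'_bilin x).
  - exact: lin_comp (bilinl (mul_bilin A) _) (bilinl theta_bilin r.1).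
by have := comC_coassoc c tb; rewrite /tsum3 !big_allpairs_dep.
Qed.

End HmapMultiplicative.

Section Reconstruction.
Variables (k : comPzRingType) (D : datum k).
Local Notation C := (dC D).
Local Notation A := (dA D).

Definition theta_of (nu : nat_family D) (c d : C) : A := epsG (nu GA c (tmul d 1)).

Lemma hmap_GA (theta : C -> C -> A) c d : bilin theta ->
  hmap theta GA c (tmul d 1) =
  \sum_(q <- comC D d) \sum_(r <- coA D (theta c q.1)) tmul (actC D q.2 r.1) r.2.
Proof.
move=> theta_bilin.
rewrite -[LHS]/(tsum2 (fun x (t : dM GA) => actM GA t (theta c x)) (coG (tmul d 1))).
rewrite coG_tmul; last exact: actM_theta_bilin theta_bilin GA c.
apply: eq_bigr => q _; rewrite /= (actG_tmul (mul_bilin A)).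
by apply: eq_bigr => r _; rewrite mul1r.
Qed.

Lemma hmapK (theta : C -> C -> A) c d : V3 theta -> theta_of (hmap theta) c d = theta c d.
Proof.
case=> theta_bilin _ theta_coact; rewrite /theta_of hmap_GA // (lin_sum (@epsG_lin _ D _)).
under eq_bigr => q _ do rewrite (lin_sum (@epsG_lin _ D _)).
under eq_bigr => q _ do under eq_bigr => r _ do rewrite epsG_tmul.
have := theta_coact c d _ _ (epsC_scale_bilin D A).
rewrite /tsum2 big_map big_allpairs_dep /= => <-.
rewrite -{2}(comC_counitl c) (lin_sum (bilinl theta_bilin d)).
by apply: eq_bigr => p _; rewrite (linZ (bilinl theta_bilin d)).
Qed.

Variable nu : nat_family D.
Arguments nu : clear implicits.
Hypothesis nu_natV : natV nu.

Lemma epsG_nu_tmul (N : lmodType k) (actN : N -> A -> N) (actN_bilin : bilin actN)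
    (actN1 : forall n, actN n 1 = n) (actNM : forall n a b, actN (actN n a) b = actN n (a * b))
    c d n :
  epsG (nu (Gmod actN_bilin actN1 actNM) c (tmul d n)) = actN n (theta_of nu c d).
Proof.
case: nu_natV => _ _ _ nu_nat.
have actNn_lin := bilinr actN_bilin n.
have actNn_act a b : actN n (a * b) = actN (actN n a) b by rewrite actNM.
have -> : tmul d n = Gmap (actN n) (tmul d 1) by rewrite Gmap_tmul // actN1.
have := Gmap_dhmor (mul_bilin A) (@mulr1 A) (fun x a b => esym (mulrA x a b))
  actN_bilin actN1 actNM actNn_lin actNn_act.
by move/nu_nat => <-; rewrite epsG_Gmap.
Qed.

Lemma epsG_nu_GA c d b : epsG (nu GA c (tmul d b)) = b * theta_of nu c d.
Proof. exact: epsG_nu_tmul. Qed.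

Lemma epsG_nu_GF (M : dhmod D) c d m :
  epsG (nu (GF M) c (tmul d m)) = actM M m (theta_of nu c d).
Proof. exact: epsG_nu_tmul. Qed.

Lemma nu_hmap (M : dhmod D) c m : nu M c m = hmap (theta_of nu) M c m.
Proof.
case: nu_natV => nu_bilin _ _ nu_nat.
rewrite -(epsG_rho (nu M c m)) (nu_nat _ _ _ (rho_dhmor M)) /rho tens_of_sum.
rewrite (lin_sum (bilinr (nu_bilin (GF M)) c)) (lin_sum (@epsG_lin _ D _)).
by apply: eq_bigr => r _; rewrite epsG_nu_GF.
Qed.

Lemma theta_of_bilin : bilin (theta_of nu).
Proof.
case: nu_natV => nu_bilin _ _ _; split=> [d|c].
  exact: lin_comp (@epsG_lin _ D _) (bilinl (nu_bilin GA) _).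
have tmul1_lin := bilinl (tmul_bilin C A) 1.
exact: lin_comp (@epsG_lin _ D _) (lin_comp (bilinr (nu_bilin GA) c) tmul1_lin).
Qed.

Lemma theta_of_act : V3_act (theta_of nu).
Proof.
case: nu_natV => nu_bilin nu_act _ _ c d a.
have nuGA_act : \sum_(p <- coA D a) nu GA (actC D c p.1) (actG *%R (tmul d 1) p.2)
    = actG *%R (nu GA c (tmul d 1)) a := nu_act GA c (tmul d 1) a.
rewrite {1}/theta_of -(epsG_act (mul_bilin A)) -nuGA_act (lin_sum (@epsG_lin _ D _)).
transitivity (\sum_(p <- coA D a) \sum_(s <- coA D p.2)
  s.2 * theta_of nu (actC D c p.1) (actC D d s.1)).
  apply: eq_bigr => p _; rewrite (actG_tmul (mul_bilin A)) /tmul_act.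
  rewrite (lin_sum (bilinr (nu_bilin GA) _)) (lin_sum (@epsG_lin _ D _)).
  by apply: eq_bigr => s _; rewrite mul1r epsG_nu_GA.
have tb : trilin (fun h1 h2 b => b * theta_of nu (actC D c h1) (actC D d h2)).
  by split=> [h2 b|h1 b|h1 h2] e u v /=; rewrite ?(bilinr (actC_bilin D))
    ?(bilinl theta_of_bilin) ?(bilinr theta_of_bilin) ?(bilinl (mul_bilin A))
    ?(bilinr (mul_bilin A)).
by have := coA_coassoc a tb; rewrite /tsum3 !big_allpairs_dep.
Qed.

Lemma nu_GA_tmul1 c d : nu GA c (tmul d 1) = \sum_(p <- comC D c) tmul p.1 (theta_of nu p.2 d).
Proof.
case: nu_natV => _ _ nu_coact _.
have hb := bilin_comp (tmul_bilin C A) (@lin_id _ _) (@epsG_lin _ D A).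
have := nu_coact GA c (tmul d 1) _ _ hb; rewrite /tsum2 big_map /= => <-.
by rewrite coG_counitr.
Qed.

Lemma theta_of_coact : V3_coact (theta_of nu).
Proof.
move=> c d P f fb; have tlift_sum := lin_sum (tlift_lin fb).
rewrite /tsum2 big_map big_allpairs_dep /=.
transitivity (tlift f (nu GA c (tmul d 1))).
  by rewrite nu_GA_tmul1 tlift_sum; apply: eq_bigr => p _; rewrite tlift_tmul.
rewrite nu_hmap (hmap_GA _ _ theta_of_bilin).
apply: etrans (tlift_sum _ _ _) _; apply: eq_bigr => q _.
apply: etrans (tlift_sum _ _ _) _; apply: eq_bigr => r _.
exact: tlift_tmul.
Qed.

Lemma theta_of_V3 : V3 (theta_of nu).
Proof. by split; [exact: theta_of_bilin | exact: theta_of_act | exact: theta_of_coact]. Qed.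

End Reconstruction.

Theorem theorem2p1p8 (k : comPzRingType) (D : datum k) :
  (forall theta : dC D -> dC D -> dA D, V3 theta -> natV (hmap theta)) /\
  (forall (a : k) (theta theta' : dC D -> dC D -> dA D),
     V3 theta -> V3 theta' ->
     forall (M : dhmod D) (c : dC D) (m : dM M),
       hmap (fun x y => a *: theta x y + theta' x y) M c m
       = a *: hmap theta M c m + hmap theta' M c m) /\
  (forall theta theta' : dC D -> dC D -> dA D, V3 theta -> V3 theta' ->
     forall (M : dhmod D) (c : dC D) (m : dM M),
       hmap (prodV3 theta theta') M c m = prodV (hmap theta) (hmap theta') M c m) /\
  (is_hopf D ->
     (forall theta theta' : dC D -> dC D -> dA D, V3 theta -> V3 theta' ->
        (forall (M : dhmod D) (c : dC D) (m : dM M),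
            hmap theta M c m = hmap theta' M c m) ->
        forall c d, theta c d = theta' c d) /\
     (forall nu : nat_family D, natV nu ->
        exists theta, V3 theta /\
          forall (M : dhmod D) (c : dC D) (m : dM M), nu M c m = hmap theta M c m)).
Proof.
split; first by move=> theta [theta_bilin theta_act theta_coact]; apply: natV_hmap.
split; first by move=> a theta theta' _ _; apply: hmap_linear.
split.
  move=> theta theta' [theta_bilin _ theta_coact] [theta'_bilin _ _] M c m.
  by rewrite hmap_prodV3_expand // prodV_hmap_expand.
move=> _; split.
- move=> theta theta' V3_theta V3_theta' h_eq c d.
  by rewrite -(hmapK c d V3_theta) -(hmapK c d V3_theta') /theta_of h_eq.
- move=> nu natV_nu; exists (theta_of nu).
  by split; [apply: theta_of_V3 | apply: nu_hmap].
Qed.
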